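(* Algebras $H_1$ and $H_2$ in a variety $\Theta$ are isotypic if and only if they are LG-equivalent.
   Context: Setting: variety $\Theta$, infinite variable set $X^0$, $\Gamma^0$ its finite subsets, $W(X)$ free $\Theta$-algebras, points $\mu:W(X)\to H$. $\Phi(X)$ ($X\in\Gamma^0$) is the $X$-sort of the multi-sorted algebra of first-order formulas over $\Theta$ (free multi-sorted Halmos algebra generated by equalities $w\equiv w'$, $w,w'\in W(X)$), with valuation $Val^X_H$ into subsets of $\mathrm{Hom}(W(X),H)$; a point $\mu$ satisfies $u$ iff $\mu\in Val^X_H(u)$, and $LKer(\mu)=\{u\in\Phi(X):\mu\in Val^X_H(u)\}$ (the LG-type of $\mu$). For $T\subset\Phi(X)$, $T^L_H=\{\mu:W(X)\to H\mid T\subset LKer(\mu)\}$; for $A\subset\mathrm{Hom}(W(X),H)$, $A^L_H=\bigcap_{\mu\in A}LKer(\mu)$; $T^{LL}_H=(T^L_H)^L_H$. $H_1,H_2$ are LG-equivalent if $T^{LL}_{H_1}=T^{LL}_{H_2}$ for every $X\in\Gamma^0$ and every $T\subset\Phi(X)$. $S^X(H)=\{LKer(\mu)\mid \mu:W(X)\to H\}$; $H_1,H_2$ are isotypic if $S^X(H_1)=S^X(H_2)$ for every $X\in\Gamma^0$. *)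

From mathcomp Require Import all_boot.
From mathcomp Require Import finmap.

Set Implicit Arguments.
Unset Strict Implicit.
Unset Printing Implicit Defensive.

Local Open Scope fset_scope.

Record signature := Signature {
  op_sym :> Type;
  arity : op_sym -> nat
}.

(* Terms over the infinite set of variables X^0 := nat. *)
Inductive term (S : signature) : Type :=
| TVar : nat -> term S
| TApp : forall o : S, ('I_(arity o) -> term S) -> term S.

Record algebra (S : signature) := Algebra {
  carrier :> Type;
  interp : forall o : S, ('I_(arity o) -> carrier) -> carrier
}.

Fixpoint teval (S : signature) (H : algebra S) (e : nat -> H) (t : term S) : H :=
  match t with
  | TVar n => e n
  | TApp o args => interp (fun i => teval e (args i))
  end.

Definition identity (S : signature) := (term S * term S)%type.

Record variety := Variety {
  vsig : signature;
  videntities : identity vsig -> Prop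
}.

Definition in_variety (Th : variety) (H : algebra (vsig Th)) : Prop :=
  forall pq, videntities pq -> forall e : nat -> H, teval e pq.1 = teval e pq.2.

Lemma ord0_empty (i : 'I_0) : False. Proof. by case: i. Qed.

Fixpoint opt_fun (A : Type) (n : nat) : ('I_n -> option A) -> option ('I_n -> A) :=
  match n return ('I_n -> option A) -> option ('I_n -> A) with
  | 0 => fun _ => Some (fun i => False_rect A (ord0_empty i))
  | n'.+1 => fun f =>
      match f ord0, opt_fun (fun j : 'I_n' => f (lift ord0 j)) with
      | Some a, Some g => Some (fun i => match unlift ord0 i with
                                        | None => a
                                        | Some j => g j end)
      | _, _ => None
      end
  end.

(* Evaluation of a term under a partial environment: None iff some variable
   of the term is outside the domain of the environment. *)
Fixpoint pteval (S : signature) (H : algebra S) (e : nat -> option H)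
    (t : term S) : option H :=
  match t with
  | TVar n => e n
  | TApp o args => omap (@interp S H o) (opt_fun (fun i => pteval e (args i)))
  end.

Definition upd (A : Type) (e : nat -> option A) (x : nat) (a : A) :
  nat -> option A := fun n => if n == x then Some a else e n.

(* Formulas built from equalities w == w' of terms by the Boolean operations
   and existential quantifiers (the operations of a Halmos algebra);
   universal quantification is the dual of FEx. *)
Inductive formula (S : signature) : Type :=
| FEq : term S -> term S -> formula S
| FTrue : formula S
| FFalse : formula S
| FNot : formula S -> formula S
| FAnd : formula S -> formula S -> formula S
| FOr : formula S -> formula S -> formula S
| FEx : nat -> formula S -> formula S.

Fixpoint tvars (S : signature) (t : term S) (X : pred nat) : bool :=
  match t with
  | TVar n => X n
  | TApp o args => [forall i, tvars (args i) X]
  end.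

Fixpoint fvars_in (S : signature) (u : formula S) (X : pred nat) : bool :=
  match u with
  | FEq t t' => tvars t X && tvars t' X
  | FTrue | FFalse => true
  | FNot u => fvars_in u X
  | FAnd u v | FOr u v => fvars_in u X && fvars_in v X
  | FEx x u => fvars_in u (predU (pred1 x) X)
  end.

Definition Phi (S : signature) (X : {fset nat}) : formula S -> Prop :=
  fun u => fvars_in u (fun n => n \in X).

Fixpoint sat (S : signature) (H : algebra S) (e : nat -> option H)
    (u : formula S) : Prop :=
  match u with
  | FEq t t' => exists a, pteval e t = Some a /\ pteval e t' = Some a
  | FTrue => True
  | FFalse => False
  | FNot u => ~ sat e u
  | FAnd u v => sat e u /\ sat e v
  | FOr u v => sat e u \/ sat e v
  | FEx x u => exists a : H, sat (upd e x a) u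
  end.

(* Since W(X) is the free algebra of Theta over X and H is in Theta,
   a point mu : W(X) -> H is the same as a map X -> H. *)
Definition point (S : signature) (H : algebra S) (X : {fset nat}) : Type :=
  {n : nat | n \in X} -> H.

Definition point_env (S : signature) (H : algebra S) (X : {fset nat})
    (mu : point H X) : nat -> option H :=
  fun n => match boolP (n \in X) with
           | AltTrue h => Some (mu (exist _ n h))
           | AltFalse _ => None
           end.

Definition Val (S : signature) (H : algebra S) (X : {fset nat})
    (u : formula S) : point H X -> Prop :=
  fun mu => sat (point_env mu) u.

Definition LKer (S : signature) (H : algebra S) (X : {fset nat})
    (mu : point H X) : formula S -> Prop :=
  fun u => Phi X u /\ Val u mu.

Definition TL (S : signature) (H : algebra S) (X : {fset nat})
    (T : formula S -> Prop) : point H X -> Prop :=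
  fun mu => forall u, T u -> LKer mu u.

Definition AL (S : signature) (H : algebra S) (X : {fset nat})
    (A : point H X -> Prop) : formula S -> Prop :=
  fun u => Phi X u /\ forall mu, A mu -> LKer mu u.

Definition TLL (S : signature) (H : algebra S) (X : {fset nat})
    (T : formula S -> Prop) : formula S -> Prop :=
  AL (@TL S H X T).
Arguments TLL {S} H X T.

Definition LG_equivalent (S : signature) (H1 H2 : algebra S) : Prop :=
  forall (X : {fset nat}) (T : formula S -> Prop),
    (forall u, T u -> Phi X u) -> TLL H1 X T = TLL H2 X T.

Definition types_of (S : signature) (H : algebra S) (X : {fset nat}) :
    (formula S -> Prop) -> Prop :=
  fun K => exists mu : point H X, K = LKer mu.
Arguments types_of {S} H X.

Definition isotypic (S : signature) (H1 H2 : algebra S) : Prop :=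
  forall X : {fset nat}, types_of H1 X = types_of H2 X.

(** An LG-type [LKer mu] is complete: of [u] and [FNot u] it contains exactly
    one.  Hence a point [nu] whose type contains [LKer mu] has exactly the type
    [LKer mu], and [LKer mu] is realised in [H2] as soon as [FFalse] is not in
    the closure [(LKer mu)^LL_H2]; since [mu] itself keeps [FFalse] out of
    [(LKer mu)^LL_H1], LG-equivalence forces this.  Conversely, the closure
    [T^LL_H] only depends on which types are realised in [H], so isotypic
    algebras have the same closures. *)

From mathcomp Require Import all_boot finmap.
From Stdlib Require Import Classical FunctionalExtensionality PropExtensionality.

Set Implicit Arguments.
Unset Strict Implicit.

Lemma pred_ext (A : Type) (P Q : A -> Prop) : (forall a, P a <-> Q a) -> P = Q.
Proof.
move=> PQ; apply: functional_extensionality => a.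
exact: propositional_extensionality.
Qed.

Section Closures.

Variables (S : signature) (X : {fset nat}).

Lemma LKer_complete (H : algebra S) (mu : point H X) (u : formula S) :
  Phi X u -> LKer mu u \/ LKer mu (FNot u).
Proof.
move=> Xu; case: (classic (Val u mu)) => [Vu | nVu]; [left | right]; by split.
Qed.

Lemma LKer_eq_of_TL (H1 H2 : algebra S) (mu : point H1 X) (nu : point H2 X) :
  TL (LKer mu) nu -> LKer mu = LKer nu.
Proof.
move=> mu_nu; apply: pred_ext => u; split; first exact: mu_nu.
case=> Xu Vu; by case: (LKer_complete mu Xu) => // /mu_nu [].
Qed.

Lemma TLL_subset_of_types_subset (H1 H2 : algebra S) (T : formula S -> Prop) :
  (forall K, types_of H2 X K -> types_of H1 X K) ->
  forall u, TLL H1 X T u -> TLL H2 X T u.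
Proof.
move=> types21 u [Xu T1u]; split=> // nu Tnu.
have [mu Knu] := types21 _ (ex_intro _ nu erefl).
by rewrite Knu; apply: T1u => v Tv; rewrite -Knu; apply: Tnu.
Qed.

Lemma TL_LKer_realised (H1 H2 : algebra S) (mu : point H1 X) :
  TLL H1 X (LKer mu) = TLL H2 X (LKer mu) -> exists nu : point H2 X, TL (LKer mu) nu.
Proof.
move=> closure_eq; apply: NNPP => unrealised.
have : TLL H2 X (LKer mu) (FFalse S).
  by split=> // nu mu_nu; case: unrealised; exists nu.
by rewrite -closure_eq => -[_ /(_ mu (fun v => id)) []].
Qed.

End Closures.

Lemma LG_equivalent_sym (S : signature) (H1 H2 : algebra S) :
  LG_equivalent H1 H2 -> LG_equivalent H2 H1.
Proof. by move=> LG12 X T TX; rewrite LG12. Qed.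

Lemma types_subset_of_LG_equivalent (S : signature) (H1 H2 : algebra S) :
  LG_equivalent H1 H2 ->
  forall X K, types_of H1 X K -> types_of H2 X K.
Proof.
move=> LG12 X _ [mu ->].
have [nu mu_nu] := TL_LKer_realised (LG12 X (LKer mu) (fun u => @proj1 _ _)).
by exists nu; apply: LKer_eq_of_TL.
Qed.

Theorem corollary3p6 (Th : variety) (H1 H2 : algebra (vsig Th)) :
  in_variety H1 -> in_variety H2 ->
  (isotypic H1 H2 <-> LG_equivalent H1 H2).
Proof.
move=> _ _; split=> [iso X T _ | LG12 X].
- apply: pred_ext => u; split; apply: TLL_subset_of_types_subset => K.
  + by rewrite iso.
  + by rewrite -iso.
- apply: pred_ext => K; split; apply: types_subset_of_LG_equivalent => //.
  exact: LG_equivalent_sym.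
Qed.
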